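(* Let $x,y\in PSBT_n$ be distinct. If the vertices $x^v$ and $y^v$ of $\mathrm{PSB}(n)$ are not adjacent, then there exist at least two tours in $PSBT_n$, different from $x$ and $y$, all of whose arcs are arcs of the multigraph $x\cup y$.
   Context: Let $n\ge 3$ and let $D_n$ be the complete directed graph on the vertex set (cities) $\{1,\dots,n\}$ with arc set $E=\{(u,v):u\neq v\}$. A Hamiltonian tour is a directed Hamiltonian cycle in $D_n$; for a tour $\tau$, $\tau(i)$ denotes the successor of city $i$, and $\tau^k(i)$, $\tau^{-k}(i)$ denote the $k$-th successor and $k$-th predecessor of $i$. A city $i$ is a peak of $\tau$ if $\tau^{-1}(i)<i$ and $\tau(i)<i$. A city $i$ is a step-back peak of $\tau$ if either ($\tau^{-1}(i)<i$, $\tau(i)=i-1$ and $\tau^2(i)>i$) or ($\tau^{-2}(i)>i$, $\tau^{-1}(i)=i-1$ and $\tau(i)<i$). A proper peak is a peak that is not a step-back peak. A pyramidal tour with step-backs is a Hamiltonian tour whose only proper peak is $n$; $PSBT_n$ denotes the set of all such tours. For a tour $x$, $x^v\in\mathbb{R}^E$ is its characteristic vector ($x^v_e=1$ if arc $e$ belongs to $x$, and $0$ otherwise), and $\mathrm{PSB}(n)=\mathrm{conv}\{x^v: x\in PSBT_n\}$; its vertices are the vectors $x^v$, $x\in PSBT_n$. Two vertices are adjacent if the segment joining them is an edge (one-dimensional face) of $\mathrm{PSB}(n)$. For tours $x,y$, $x\cup y$ denotes the multigraph on $\{1,\dots,n\}$ containing all arcs of $x$ and all arcs of $y$ (arcs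 common to both counted twice). *)

(* Cities are 'I_n (city k of the paper is ordinal k-1). *)
From HB Require Import structures.
From mathcomp Require Import all_boot all_order all_algebra all_fingroup.
Set Implicit Arguments. Unset Strict Implicit. Unset Printing Implicit Defensive.
Import Order.TTheory GRing.Theory Num.Theory.

Section Defs.
Variable n : nat.

(* A Hamiltonian tour = successor permutation forming a single cycle. *)
Definition is_tour (s : {perm 'I_n}) : Prop :=
  forall i : 'I_n, porbit s i = [set: 'I_n].

Definition succ (s : {perm 'I_n}) (i : 'I_n) : 'I_n := s i.
Definition pred (s : {perm 'I_n}) (i : 'I_n) : 'I_n := (s^-1)%g i.

Definition is_peak (s : {perm 'I_n}) (i : 'I_n) : bool :=
  (pred s i < i)%N && (succ s i < i)%N.

Definition is_stepback_peak (s : {perm 'I_n}) (i : 'I_n) : bool :=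
  [&& (pred s i < i)%N, (succ s i).+1 == i :> nat & (i < succ s (succ s i))%N]
  || [&& (i < pred s (pred s i))%N, (pred s i).+1 == i :> nat & (succ s i < i)%N].

Definition is_proper_peak (s : {perm 'I_n}) (i : 'I_n) : bool :=
  is_peak s i && ~~ is_stepback_peak s i.

Definition psbt (s : {perm 'I_n}) : Prop :=
  is_tour s /\ forall i : 'I_n, is_proper_peak s i = (val i == n.-1).

Definition arc : Type := {e : 'I_n * 'I_n | e.1 != e.2}.

Variable R : realFieldType.
Local Open Scope ring_scope.

Definition charvec (s : {perm 'I_n}) : arc -> R :=
  fun e => if s (val e).1 == (val e).2 then 1 else 0.

Definition in_PSB (p : arc -> R) : Prop :=
  exists lam : {perm 'I_n} -> R,
    [/\ forall s, 0 <= lam s,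
        forall s, ~ psbt s -> lam s = 0,
        \sum_(s : {perm 'I_n}) lam s = 1
      & forall e, p e = \sum_(s : {perm 'I_n}) lam s * charvec s e].

Definition dotv (c p : arc -> R) : R := \sum_(e : arc) c e * p e.

Definition in_seg (a b p : arc -> R) : Prop :=
  exists t : R, [/\ 0 <= t, t <= 1 & forall e, p e = (1 - t) * a e + t * b e].

(* The segment [x^v, y^v] is a face of PSB(n): it is the set of maximisers in
   PSB(n) of some linear functional c. (With x <> y it is one-dimensional.) *)
Definition adjacent (x y : {perm 'I_n}) : Prop :=
  exists c : arc -> R,
    [/\ forall p, in_PSB p -> dotv c p <= dotv c (charvec x),
        forall p, in_PSB p -> dotv c p = dotv c (charvec x) ->
                  in_seg (charvec x) (charvec y) p
      & forall p, in_seg (charvec x) (charvec y) p ->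
                  in_PSB p /\ dotv c p = dotv c (charvec x)].
End Defs.

From Pilot Require Import Defs.
From HB Require Import structures.
From mathcomp Require Import all_boot all_order all_algebra all_fingroup.
From Stdlib Require Import Classical.
From mathcomp Require Import lra.
Set Implicit Arguments. Unset Strict Implicit. Unset Printing Implicit Defensive.
Import Order.TTheory GRing.Theory Num.Theory.

(* We prove the contrapositive: if the tours of PSBT_n built from arcs of
   x ∪ y, other than x and y, are at most one tour z, then x^v and y^v are
   adjacent in PSB(n).

   Adjacency is certified by a linear functional c exposing the segment
   [x^v, y^v]: whenever c(x^v) = c(y^v) and c(s^v) < c(x^v) for every other
   tour s of PSBT_n, the segment is exactly the face of maximisers of c
   (lemma [adjacent_of_exposing]).  The functional is a weight on arcs: arcs
   outside x ∪ y cost -3, and inside x ∪ y only two "reward" arcs, the arc of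
   x leaving a city i0 and the arc of y leaving a city i1, have weight 1.  When a third tour z exists, choosing i0, i1
   where z leaves x, resp. y, makes z miss both reward arcs
   ([adjacent_of_one_extra_tour]); the theorem follows by contradiction. *)

Section Adjacency.
Variable n : nat.
Variable R : realFieldType.
Local Open Scope ring_scope.

Implicit Types (s x y z : {perm 'I_n}) (c p : Defs.arc n -> R).

(* A Hamiltonian tour on at least two cities has no fixed point, so its
   successor function only uses genuine arcs. *)
Lemma tour_no_fixpoint s : is_tour s -> (1 < n)%N -> forall i, s i != i.
Proof.
move=> tour_s n_gt1 i; apply/eqP => s_i.
have [j j_neq_i] : exists j : 'I_n, j != i.
  case: (eqVneq (val i) 0%N) => [i_eq0|i_neq0].
    by exists (Ordinal n_gt1); apply/eqP => /(congr1 val) /=; rewrite i_eq0.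
  by exists (Ordinal (ltnW n_gt1)); apply: contra_neq i_neq0 => /(congr1 val)/esym.
have : j \in porbit s i by rewrite tour_s inE.
case/porbitP => k j_eq.
have iter_i k' : iter k' s i = i by elim: k' => //= k' ->.
by rewrite j_eq permX iter_i eqxx in j_neq_i.
Qed.

Lemma dotv_charvec (w : 'I_n -> 'I_n -> R) s : (forall i, s i != i) ->
  dotv (fun e : Defs.arc n => w (val e).1 (val e).2) (charvec R s) = \sum_i w i (s i).
Proof.
move=> s_fixfree; rewrite /dotv /charvec.
pose G (p : 'I_n * 'I_n) := w p.1 p.2 * (if s p.1 == p.2 then 1 else 0).
have -> : \sum_(e : Defs.arc n) w (val e).1 (val e).2 * (if s (val e).1 == (val e).2 then 1 else 0)
   = \sum_(p | p.1 != p.2) G p.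
  symmetry; rewrite (reindex_omap (val : Defs.arc n -> _) insub); last first.
    by move=> p p_arc; rewrite insubT.
  by apply: eq_bigl => -[p p_arc] /=; rewrite insubT /= p_arc eqxx.
rewrite big_mkcond /= (eq_bigr G); last first.
  by move=> [i j] _ /=; case: eqP => // <-; rewrite /G /= (negbTE (s_fixfree i)) mulr0.
rewrite -(pair_big xpredT xpredT (fun i j => G (i, j))) /=.
apply: eq_bigr => i _; rewrite (bigD1 (s i)) //= /G /= eqxx mulr1 big1 ?addr0 //.
by move=> j /negbTE; rewrite eq_sym => ->; rewrite mulr0.
Qed.

Lemma dotv_mixture c (p : Defs.arc n -> R) (lam : {perm 'I_n} -> R) :
  (forall e, p e = \sum_s lam s * charvec R s e) ->
  dotv c p = \sum_s lam s * dotv c (charvec R s).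
Proof.
move=> p_mix; rewrite /dotv.
under eq_bigr do rewrite p_mix mulr_sumr.
rewrite exchange_big; apply: eq_bigr => s _; rewrite mulr_sumr.
by apply: eq_bigr => e _; rewrite mulrCA.
Qed.

Section Exposing.
Variables (c : Defs.arc n -> R) (x y : {perm 'I_n}).
Hypotheses (psbt_x : psbt x) (psbt_y : psbt y).
Hypothesis c_yx : dotv c (charvec R y) = dotv c (charvec R x).
Hypothesis c_lt : forall s, psbt s -> s <> x -> s <> y ->
  dotv c (charvec R s) < dotv c (charvec R x).

Let cx := dotv c (charvec R x).

Lemma exposing_le s : psbt s -> dotv c (charvec R s) <= cx.
Proof.
move=> psbt_s; have [->|s_x] := eqVneq s x; first by [].
have [->|s_y] := eqVneq s y; first by rewrite c_yx.
by apply/ltW/c_lt => // /eqP; apply/negP.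
Qed.

Lemma exposing_max p : in_PSB p -> dotv c p <= cx.
Proof.
move=> [lam [lam_ge0 lam_psbt lam_sum p_mix]].
rewrite (dotv_mixture c p_mix) -[X in _ <= X]mul1r -lam_sum mulr_suml.
apply: ler_sum => s _; case: (classic (psbt s)) => [psbt_s|not_psbt_s].
  by apply: ler_wpM2l => //; apply: exposing_le.
by rewrite lam_psbt // !mul0r.
Qed.

Lemma exposing_support p lam :
  [/\ forall s, 0 <= lam s, forall s, ~ psbt s -> lam s = 0,
      \sum_s lam s = 1 & forall e, p e = \sum_s lam s * charvec R s e] ->
  dotv c p = cx -> forall s, s <> x -> s <> y -> lam s = 0.
Proof.
move=> [lam_ge0 lam_psbt lam_sum p_mix] cp s s_x s_y.
case: (classic (psbt s)) => [psbt_s|]; last exact: lam_psbt.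
pose gap s' := lam s' * (cx - dotv c (charvec R s')).
have gap_ge0 s' : true -> 0 <= gap s'.
  move=> _; case: (classic (psbt s')) => [psbt_s'|not_psbt_s'].
    by apply: mulr_ge0 => //; rewrite subr_ge0 exposing_le.
  by rewrite /gap lam_psbt // mul0r.
have gap_sum : \sum_s' gap s' = 0.
  rewrite /gap; under eq_bigr do rewrite mulrBr.
  by rewrite sumrB -mulr_suml lam_sum mul1r -(dotv_mixture c p_mix) cp subrr.
have /eqP := @psumr_eq0P _ _ _ _ gap_ge0 gap_sum s isT.
by rewrite /gap mulf_eq0 subr_eq0 /cx (gt_eqF (c_lt psbt_s s_x s_y)) orbF => /eqP.
Qed.

Lemma exposing_face_in_seg p :
  in_PSB p -> dotv c p = cx -> in_seg (charvec R x) (charvec R y) p.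
Proof.
move=> [lam lam_conv] cp; have := exposing_support lam_conv cp.
case: lam_conv => lam_ge0 _ lam_sum p_mix lam0.
have [x_y|x_y] := eqVneq x y.
  have lam_x : lam x = 1.
    by rewrite -lam_sum (bigD1 x) //= big1 ?addr0 // => s /eqP s_x; apply: lam0 => // s_y; rewrite s_y x_y in s_x.
  exists 0; split => // e; rewrite p_mix (bigD1 x) //= big1 ?addr0.
    by rewrite lam_x subr0 !mul1r mul0r addr0.
  by move=> s /eqP s_x; rewrite lam0 ?mul0r // => s_y; rewrite s_y x_y in s_x.
have sum_xy (F : {perm 'I_n} -> R) : \sum_s lam s * F s = lam x * F x + lam y * F y.
  rewrite (bigD1 x) //= (bigD1 y) 1?eq_sym //= big1 ?addr0 //.
  by move=> s /andP[/eqP s_y /eqP s_x]; rewrite lam0 ?mul0r.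
have lam_xy : lam x + lam y = 1.
  by rewrite -lam_sum; have := sum_xy (fun _ => 1); rewrite !mulr1 => <-; apply: eq_bigr => s _; rewrite mulr1.
exists (lam y); split; first exact: lam_ge0.
  by rewrite -lam_xy lerDr.
by move=> e; rewrite p_mix sum_xy -lam_xy addrK.
Qed.

Lemma seg_in_exposing_face p :
  in_seg (charvec R x) (charvec R y) p -> in_PSB p /\ dotv c p = cx.
Proof.
move=> [t [t_ge0 t_le1 p_seg]].
pose lam s := (if s == x then 1 - t else 0) + (if s == y then t else 0).
have sum_lam (F : {perm 'I_n} -> R) : \sum_s lam s * F s = (1 - t) * F x + t * F y.
  rewrite /lam; under eq_bigr do rewrite mulrDl.
  rewrite big_split /=; congr (_ + _).
    by rewrite (bigD1 x) //= eqxx big1 ?addr0 // => s /negbTE ->; rewrite mul0r.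
  by rewrite (bigD1 y) //= eqxx big1 ?addr0 // => s /negbTE ->; rewrite mul0r.
have p_mix e : p e = \sum_s lam s * charvec R s e by rewrite sum_lam p_seg.
split.
  exists lam; split => //.
  - by move=> s; rewrite /lam; apply: addr_ge0; case: ifP => // _; rewrite subr_ge0.
  - move=> s not_psbt_s; rewrite /lam.
    by case: eqP => [s_x|_]; [rewrite s_x in not_psbt_s|case: eqP => [s_y|_]; [rewrite s_y in not_psbt_s|rewrite addr0]].
  - by rewrite -(eq_bigr _ (fun s _ => mulr1 (lam s))) sum_lam !mulr1 subrK.
by rewrite (dotv_mixture c p_mix) sum_lam c_yx -mulrDl subrK mul1r.
Qed.

Lemma adjacent_of_exposing : adjacent R x y.
Proof.
exists c; split; [exact: exposing_max|exact: exposing_face_in_seg|].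
exact: seg_in_exposing_face.
Qed.

End Exposing.

Definition in_union x y s : Prop := forall i, s i = x i \/ s i = y i.

Definition reward_weight x y (i0 i1 : 'I_n) (i j : 'I_n) : R :=
  if j == x i then (i == i0)%:R else if j == y i then (i == i1)%:R else -3.

Lemma sum_indicator (a : 'I_n) : \sum_i ((i == a)%:R : R) = 1.
Proof. by rewrite (bigD1 a) //= eqxx big1 ?addr0 // => i /negbTE ->. Qed.

Section RewardWeight.
Variables (x y : {perm 'I_n}) (i0 i1 : 'I_n).
Hypothesis shared_x : x i1 = y i1 -> i1 = i0.
Hypothesis shared_y : y i0 = x i0 -> i0 = i1.

Let w := reward_weight x y i0 i1.

Lemma reward_weight_le i j : w i j <= (i == i0)%:R + (i == i1)%:R.
Proof.
rewrite /w /reward_weight; case: ifP => _; first by rewrite lerDl ler0n.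
case: ifP => _; first by rewrite lerDr ler0n.
by apply: (le_trans (y := 0)); [lra|rewrite -natrD ler0n].
Qed.

Lemma reward_weight_x : \sum_i w i (x i) = 1.
Proof. by rewrite -(sum_indicator i0); apply: eq_bigr => i _; rewrite /w /reward_weight eqxx. Qed.

Lemma reward_weight_y : \sum_i w i (y i) = 1.
Proof.
rewrite -(sum_indicator i1); apply: eq_bigr => i _; rewrite /w /reward_weight eqxx.
case: eqP => [y_x|_] //; congr (_%:R).
have [i_eq0|i_i0] := eqVneq i i0.
  by rewrite i_eq0 in y_x *; rewrite (shared_y y_x) eqxx.
have [i_i1|//] := eqVneq i i1.
by rewrite i_i1 in y_x i_i0; rewrite (shared_x (esym y_x)) eqxx in i_i0.
Qed.

Lemma reward_weight_miss s : in_union x y s -> s i0 <> x i0 -> s i1 <> y i1 ->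
  \sum_i w i (s i) = 0.
Proof.
move=> s_union s_i0 s_i1; rewrite big1 // => i _; rewrite /w /reward_weight.
case: (s_union i) => s_i; rewrite s_i eqxx.
  by case: eqP => // i_eq; rewrite -i_eq s_i in s_i0.
case: ifP => [/eqP y_x|_]; case: eqP => // i_eq.
  by rewrite -i_eq s_i y_x in s_i0.
by rewrite -i_eq s_i in s_i1.
Qed.

(* A permutation using an arc outside x ∪ y scores at most 2 - 3 = -1. *)
Lemma reward_weight_leave s : ~ in_union x y s -> \sum_i w i (s i) < 1.
Proof.
move=> /not_all_ex_not [i2 /not_or_and [s_x2 s_y2]].
rewrite (bigD1 i2) //=.
have -> : w i2 (s i2) = -3.
  by rewrite /w /reward_weight; do 2 (case: eqP => // _).
have : \sum_(i | i != i2) w i (s i) <= 2.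
  apply: (le_trans (y := \sum_i (((i == i0)%:R : R) + (i == i1)%:R))).
    rewrite [X in _ <= X](bigD1 i2) //= -[X in X <= _]add0r.
    apply: lerD; first by apply: addr_ge0; apply: ler0n.
    by apply: ler_sum => i _; apply: reward_weight_le.
  by rewrite big_split /= !sum_indicator.
lra.
Qed.

End RewardWeight.

Lemma adjacent_of_reward_arcs x y (i0 i1 : 'I_n) :
  (1 < n)%N -> psbt x -> psbt y ->
  (x i1 = y i1 -> i1 = i0) -> (y i0 = x i0 -> i0 = i1) ->
  (forall s, psbt s -> in_union x y s -> s <> x -> s <> y ->
     s i0 <> x i0 /\ s i1 <> y i1) ->
  adjacent R x y.
Proof.
move=> n_gt1 psbt_x psbt_y shared_x shared_y miss.
pose c (e : Defs.arc n) := reward_weight x y i0 i1 (val e).1 (val e).2.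
have c_tour s : psbt s -> dotv c (charvec R s) = \sum_i reward_weight x y i0 i1 i (s i).
  by move=> [tour_s _]; apply/dotv_charvec/tour_no_fixpoint.
apply: (@adjacent_of_exposing c) => //.
  by rewrite !c_tour // reward_weight_x ?reward_weight_y.
move=> s psbt_s s_x s_y; rewrite !c_tour // reward_weight_x //.
case: (classic (in_union x y s)) => [s_union|]; last exact: reward_weight_leave.
have [s_i0 s_i1] := miss s psbt_s s_union s_x s_y.
by rewrite reward_weight_miss ?ltr01.
Qed.

Lemma adjacent_of_one_extra_tour x y z :
  (1 < n)%N -> psbt x -> psbt y -> in_union x y z ->
  (forall s, psbt s -> in_union x y s -> [\/ s = x, s = y | s = z]) ->
  adjacent R x y.
Proof.
move=> n_gt1 psbt_x psbt_y z_union only_z.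
have [z_xy|/not_or_and [z_x z_y]] := classic (z = x \/ z = y).
  pose i : 'I_n := Ordinal (ltnW n_gt1).
  apply: (@adjacent_of_reward_arcs x y i i) => // s psbt_s s_union s_x s_y.
  by case: (only_z s psbt_s s_union) => // s_z; case: z_xy; rewrite -s_z.
have [i0 z_i0] : exists i, z i <> x i.
  by apply: not_all_ex_not => z_eq; apply/z_x/permP.
have [i1 z_i1] : exists i, z i <> y i.
  by apply: not_all_ex_not => z_eq; apply/z_y/permP.
have y_i0 : z i0 = y i0 by case: (z_union i0).
have x_i1 : z i1 = x i1 by case: (z_union i1).
apply: (@adjacent_of_reward_arcs x y i0 i1) => //.
- by move=> xy_i1; case: z_i1; rewrite x_i1.
- by move=> yx_i0; case: z_i0; rewrite y_i0.
- move=> s psbt_s s_union s_x s_y.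
  by case: (only_z s psbt_s s_union) => // ->.
Qed.

End Adjacency.

Theorem lemma2 (n : nat) (R : realFieldType) (x y : {perm 'I_n}) :
  (3 <= n)%N -> psbt x -> psbt y -> x <> y ->
  ~ adjacent R x y ->
  exists z1 z2 : {perm 'I_n},
    [/\ psbt z1, psbt z2, z1 <> z2,
        [/\ z1 <> x, z1 <> y, z2 <> x & z2 <> y]
      & forall i : 'I_n, (z1 i = x i \/ z1 i = y i) /\ (z2 i = x i \/ z2 i = y i)].
Proof.
move=> n_ge3 psbt_x psbt_y _ not_adj.
have n_gt1 : (1 < n)%N by apply: ltnW.
pose extra z := [/\ psbt z, z <> x, z <> y & in_union x y z].
have [[z1 [psbt_z1 z1_x z1_y z1_union]]|no_extra] := classic (exists z, extra z); last first.
  case: not_adj; apply: (@adjacent_of_one_extra_tour n R x y x) => // [i|s psbt_s s_union].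
    by left.
  have [->|s_x] := classic (s = x); first by constructor 1.
  have [->|s_y] := classic (s = y); first by constructor 2.
  by case: no_extra; exists s.
have [[z2 [[psbt_z2 z2_x z2_y z2_union] z2_z1]]|no_second] :=
  classic (exists z2, extra z2 /\ z2 <> z1).
  by exists z1, z2; split => // z1_z2; apply: z2_z1.
case: not_adj; apply: (@adjacent_of_one_extra_tour n R x y z1) => // s psbt_s s_union.
have [->|s_x] := classic (s = x); first by constructor 1.
have [->|s_y] := classic (s = y); first by constructor 2.
have [->|s_z1] := classic (s = z1); first by constructor 3.
by case: no_second; exists s; split; first split.
Qed.
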